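(* Let $\mathcal D\subset\mathbb R^3$ be a polyhedral cone with edges $E_i=\{tp_i:t\ge0\}$, $i=1,\dots,N_0$, and $\hat E=\bigcup_iE_i$. (i) For any $i\in\{1,\dots,N_0\}$ and all $x\in\mathcal D$, $d(x,E_i)\le\big|x-|x|p_i\big|\le2\,d(x,E_i)$. (ii) Let $\alpha_1,\dots,\alpha_{N_0}\in\mathbb R$. There exists $N=N(\mathcal D,\alpha_1,\dots,\alpha_{N_0})>0$ such that for any $x\in\mathcal D$, $r>0$ and $k$ with $d(x,\hat E)=d(x,E_k)$, $$N^{-1}\Big(\frac{d(x,E_k)\wedge r}{|x|\wedge r}\Big)^{\alpha_k}\le\prod_{i=1}^{N_0}\Big(\frac{d(x,E_i)\wedge r}{|x|\wedge r}\Big)^{\alpha_i}\le N\Big(\frac{d(x,E_k)\wedge r}{|x|\wedge r}\Big)^{\alpha_k}.$$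
   Context: Polyhedral cone: $\mathcal M\subset\mathbb S^2$ is a connected open subset of the unit sphere whose boundary has $N_0\ge3$ vertices $p_1,\dots,p_{N_0}$ and whose sides are arcs of great circles; $\mathcal D=\{x\in\mathbb R^3\setminus\{\mathbf 0\}:x/|x|\in\mathcal M\}$. (The paper additionally assumes that near each $p_i$, $\mathcal D$ coincides locally with a translated wedge $\{(\rho\cos\theta,\rho\sin\theta):\rho>0,0<\theta<\kappa_i\}\times\mathbb R$ up to rotation, $\kappa_i\in(0,2\pi)\setminus\{\pi\}$, and near other boundary points of $\mathcal M$ locally with a half ball.) *)

From HB Require Import structures.
From mathcomp Require Import all_boot all_order all_algebra.
From mathcomp Require Import all_classical all_reals all_analysis.
Set Implicit Arguments. Unset Strict Implicit. Unset Printing Implicit Defensive.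
Import Order.TTheory GRing.Theory Num.Theory.
Import numFieldNormedType.Exports.
Local Open Scope classical_set_scope.
Local Open Scope ring_scope.

Section PolyCone.
Variable R : realType.
Local Notation V := 'rV[R]_3.

(* Euclidean inner product and norm on R^3 (the library norm on matrices is the sup norm). *)
Definition dot (u v : V) : R := (u *m v^T) 0 0.
Definition enorm (u : V) : R := Num.sqrt (dot u u).

Definition dist_set (x : V) (A : set V) : R := inf [set enorm (x - y) | y in A].

Definition sphere : set V := [set u | enorm u = 1].

Definition cone (M : set V) : set V := [set x | x != 0 /\ M ((enorm x)^-1 *: x)].

Definition edge (p : V) : set V := [set t *: p | t in [set t : R | 0 <= t]].

Definition great_arc (a b : V) (S : set V) : Prop :=
  exists (u v : V) (th : R),
    [/\ enorm u = 1, enorm v = 1, dot u v = 0 & 0 < th < 2 * pi] /\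
    [/\ u = a, cos th *: u + sin th *: v = b &
        S = [set cos t *: u + sin t *: v | t in [set t : R | 0 <= t <= th]]].

Definition wedge3 (kappa : R) : set V :=
  [set z | exists rho th : R, [/\ 0 < rho, 0 < th < kappa,
            z 0 0 = rho * cos th & z 0 1 = rho * sin th]].

Definition sbdry (M : set V) : set V := closure M `\` M.

Definition polyhedral_cone (N0 : nat) (p : 'I_N0 -> V) (M : set V) : Prop :=
  [/\ (3 <= N0)%N,
      M `<=` sphere,
      (exists U : set V, open U /\ M = U `&` sphere),
      connected M &
      (forall i, enorm (p i) = 1) /\ injective p] /\
  [/\
      (exists S : 'I_N0 -> set V,
          (forall i, great_arc (p i) (p (ordS i)) (S i)) /\
          sbdry M = \bigcup_(i in setT) S i),
      (* near each vertex, D is locally a rotated, translated wedge x R *)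
      (forall i, exists (kappa rho : R) (Q : 'M[R]_3),
          [/\ 0 < kappa < 2 * pi, kappa != pi, Q *m Q^T = 1%:M, 0 < rho &
              forall y, enorm (y - p i) < rho ->
                (cone M y <-> wedge3 kappa ((y - p i) *m Q^T))]) &
      (* near other boundary points, D is locally a half ball *)
      (forall q, sbdry M q -> (forall i, q != p i) ->
          exists (rho : R) (n : V), [/\ 0 < rho, enorm n = 1 &
              forall y, enorm (y - q) < rho -> (cone M y <-> 0 < dot (y - q) n)])].

End PolyCone.

From HB Require Import structures.
From mathcomp Require Import all_boot all_order all_algebra.
From mathcomp Require Import all_classical all_reals all_analysis.
From mathcomp Require Import ring lra.
Import Order.TTheory GRing.Theory Num.Theory.
Import numFieldNormedType.Exports.
Local Open Scope classical_set_scope.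
Local Open Scope ring_scope.

(* (i) follows from the triangle inequality through the nearest point t p of
   the edge, since | |x| - t | <= |x - t p|.  For (ii), (i) shows that distinct
   edges separate: if E_k is a nearest edge then d(x, E_i) >= |p_i - p_k| |x| / 4
   for i <> k.  Hence every factor with i <> k lies in [c, 1] for a constant
   c > 0 depending only on the vertices, so its power lies between two
   constants, and only the k-th factor remains. *)

Section EuclideanNorm.
Context {R : realType}.
Implicit Types (a : R) (u v : 'rV[R]_3).

Lemma dotE u v : dot u v = u 0 0 * v 0 0 + u 0 1 * v 0 1 + u 0 2 * v 0 2.
Proof.
rewrite /dot !mxE !big_ord_recr big_ord0 /= !mxE add0r.
by congr (u 0 _ * v 0 _ + u 0 _ * v 0 _ + u 0 _ * v 0 _); apply/val_inj.
Qed.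

Lemma dot_self u : dot u u = \sum_j u 0 j ^+ 2.
Proof. by rewrite /dot mxE; apply: eq_bigr => j _; rewrite mxE expr2. Qed.

Lemma dot_self_ge0 u : 0 <= dot u u.
Proof. by rewrite dot_self sumr_ge0 // => j _; apply: sqr_ge0. Qed.

Lemma dot_self_gt0 u : u != 0 -> 0 < dot u u.
Proof.
move=> u_neq0; have [j uj_neq0] : exists j, u 0 j != 0.
  apply/existsP; apply: contraR u_neq0 => /existsPn u0.
  by apply/eqP/rowP => j; rewrite mxE; apply/eqP/negbNE/u0.
have uj_gt0 : 0 < u 0 j ^+ 2 by rewrite lt_def sqrf_eq0 uj_neq0 sqr_ge0.
rewrite dot_self (bigD1 j) //= ltr_wpDr // sumr_ge0 // => i _.
exact: sqr_ge0.
Qed.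

(* Lagrange's identity makes the defect of Cauchy--Schwarz a sum of squares. *)
Lemma dot_sqr_le u v : dot u v ^+ 2 <= dot u u * dot v v.
Proof.
rewrite !dotE.
have := sqr_ge0 (u 0 0 * v 0 1 - u 0 1 * v 0 0).
have := sqr_ge0 (u 0 0 * v 0 2 - u 0 2 * v 0 0).
have := sqr_ge0 (u 0 1 * v 0 2 - u 0 2 * v 0 1).
nra.
Qed.

Lemma enorm_ge0 u : 0 <= enorm u.
Proof. exact: sqrtr_ge0. Qed.

Lemma enorm_gt0 u : u != 0 -> 0 < enorm u.
Proof. by move=> /dot_self_gt0; rewrite -sqrtr_gt0. Qed.

Lemma dot_le_enorm u v : dot u v <= enorm u * enorm v.
Proof.
rewrite /enorm -sqrtrM ?dot_self_ge0 //; apply: le_trans (ler_norm _) _.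
by rewrite -sqrtr_sqr ler_wsqrtr ?dot_sqr_le.
Qed.

Lemma enormZ a u : enorm (a *: u) = `|a| * enorm u.
Proof.
rewrite /enorm.
have -> : dot (a *: u) (a *: u) = a ^+ 2 * dot u u by rewrite !dotE !mxE; ring.
by rewrite sqrtrM ?sqr_ge0 // sqrtr_sqr.
Qed.

Lemma enormN u : enorm (- u) = enorm u.
Proof. by rewrite -scaleN1r enormZ normrN1 mul1r. Qed.

Lemma enormB u v : enorm (u - v) = enorm (v - u).
Proof. by rewrite -enormN opprB. Qed.

Lemma enormD u v : enorm (u + v) <= enorm u + enorm v.
Proof.
have sum_ge0 : 0 <= enorm u + enorm v by rewrite addr_ge0 ?enorm_ge0.
rewrite -(ger0_norm sum_ge0) -sqrtr_sqr /enorm; apply: ler_wsqrtr.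
have -> : dot (u + v) (u + v) = dot u u + 2 * dot u v + dot v v.
  by rewrite !dotE !mxE; ring.
rewrite sqrrD !sqr_sqrtr ?dot_self_ge0 //.
have := dot_le_enorm u v; rewrite /enorm; lra.
Qed.

Lemma enorm_dist_ge u v : `|enorm u - enorm v| <= enorm (u - v).
Proof.
have := enormD (u - v) v; have := enormD (v - u) u.
rewrite !subrK (enormB v) ler_norml; lra.
Qed.

End EuclideanNorm.

Section EdgeDistance.
Context {R : realType}.
Implicit Types (a : R) (x : 'rV[R]_3) (A B : set 'rV[R]_3).

Lemma dist_set_le x A y : A y -> dist_set x A <= enorm (x - y).
Proof.
move=> Ay; apply: ge_inf; last by exists y.
by exists 0 => _ [z _ <-]; apply: enorm_ge0.
Qed.

Lemma dist_set_ge x A a : A !=set0 -> (forall y, A y -> a <= enorm (x - y)) ->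
  a <= dist_set x A.
Proof.
move=> [y Ay] A_ge; apply: lb_le_inf; first by exists (enorm (x - y)), y.
by move=> _ [z Az <-]; apply: A_ge.
Qed.

Lemma le_dist_set x A B : A `<=` B -> A !=set0 -> dist_set x B <= dist_set x A.
Proof. by move=> AB A_neq0; apply: dist_set_ge => // y /AB; apply: dist_set_le. Qed.

Lemma edge0 (q : 'rV[R]_3) : edge q 0.
Proof. by exists 0; rewrite ?scale0r /=. Qed.

Lemma dist_edge_le_enorm x (q : 'rV[R]_3) : dist_set x (edge q) <= enorm x.
Proof. by rewrite -[x in enorm x]subr0; apply/dist_set_le/edge0. Qed.

Lemma dist_edge_radial (x q : 'rV[R]_3) : enorm q = 1 ->
  dist_set x (edge q) <= enorm (x - enorm x *: q) <= 2 * dist_set x (edge q).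
Proof.
move=> q1; apply/andP; split.
  by apply: dist_set_le; exists (enorm x) => //; apply: enorm_ge0.
rewrite -ler_pdivrMl //; apply: dist_set_ge; first by exists 0; apply: edge0.
move=> _ [t t_ge0 <-] /=.
have := enormD (x - t *: q) (t *: q - enorm x *: q).
rewrite addrA subrK -scalerBl enormZ q1 mulr1.
have := enorm_dist_ge (t *: q) x.
rewrite enormZ q1 mulr1 (ger0_norm t_ge0) enormB distrC.
lra.
Qed.

(* |x| (u - v) = (x - |x| v) - (x - |x| u), and each term is at most twice a
   distance by [dist_edge_radial]. *)
Lemma dist_edge_sep x (u v : 'rV[R]_3) : enorm u = 1 -> enorm v = 1 ->
  dist_set x (edge v) <= dist_set x (edge u) ->
  enorm (u - v) * enorm x <= 4 * dist_set x (edge u).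
Proof.
move=> u1 v1 dv_le_du.
have := enormD (x - enorm x *: v) (- (x - enorm x *: u)).
rewrite enormN opprB addrC addrA subrK -scalerBr enormZ ger0_norm ?enorm_ge0 //.
have /andP[_ +] := dist_edge_radial x u u1.
have /andP[_ +] := dist_edge_radial x v v1.
lra.
Qed.

End EdgeDistance.

Section PowerBounds.
Context {R : realType}.

Lemma min_ratio_bounds (c s d r : R) : 0 < c <= 1 -> 0 < s -> 0 < r ->
  c * s <= d <= s -> c <= Num.min d r / Num.min s r <= 1.
Proof.
move=> /andP[c_gt0 c_le1] s_gt0 r_gt0 /andP[cs_le_d d_le_s].
have m_gt0 : 0 < Num.min s r by rewrite lt_min s_gt0.
have m_le_s : Num.min s r <= s by rewrite ge_min lexx.
have m_le_r : Num.min s r <= r by rewrite ge_min lexx orbT.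
have cm_le_d : c * Num.min s r <= d.
  by rewrite (le_trans _ cs_le_d) // ler_pM2l.
have cm_le_r : c * Num.min s r <= r.
  exact: le_trans (ler_piMl (ltW m_gt0) c_le1) m_le_r.
rewrite ler_pdivlMr // ler_pdivrMr // mul1r !le_min cm_le_d cm_le_r ge_min d_le_s /=.
by rewrite ge_min lexx orbT.
Qed.

Lemma powR_bounds (c q a : R) : 0 < c -> c <= q <= 1 ->
  expR (- (`|a| * - ln c)) <= q `^ a <= expR (`|a| * - ln c).
Proof.
move=> c_gt0 /andP[c_le_q q_le1].
have q_gt0 : 0 < q := lt_le_trans c_gt0 c_le_q.
have lnc_le_lnq : ln c <= ln q by rewrite ler_ln ?posrE.
have lnq_le0 : ln q <= 0 := ln_le0 q_le1.
have : `|a * ln q| <= `|a| * - ln c.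
  by rewrite normrM (ler0_norm lnq_le0); apply: ler_wpM2l; rewrite ?lerN2.
by rewrite /powR gt_eqF // !ler_expR mulrC -ler_norml.
Qed.

Lemma prod_powR_bounds (I : finType) (P : pred I) (a q : I -> R) (c : R) :
  0 < c <= 1 -> (forall i, P i -> c <= q i <= 1) ->
  (expR (\sum_i `|a i| * - ln c))^-1 <= \prod_(i | P i) q i `^ a i
  <= expR (\sum_i `|a i| * - ln c).
Proof.
move=> /andP[c_gt0 c_le1] q_bnd.
have L_ge0 i : 0 <= `|a i| * - ln c by rewrite mulr_ge0 // oppr_ge0 ln_le0.
rewrite -expRN -sumrN !expR_sum (big_mkcond P) /=; apply/andP; split.
- apply: ler_prod => i _; rewrite expR_ge0 /=.
  case: ifP => [/q_bnd/(powR_bounds _ _ (a i) c_gt0)/andP[] //|_].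
  by rewrite expR_le1 oppr_le0.
- apply: ler_prod => i _; rewrite fun_if powR_ge0 /=.
  case: ifP => [/q_bnd/(powR_bounds _ _ (a i) c_gt0)/andP[] //|_].
  by rewrite ler01 /= -expR0 ler_expR.
Qed.

Lemma prod_powR_near (I : finType) (k : I) (a q : I -> R) (c : R) :
  0 < c <= 1 -> (forall i, i != k -> c <= q i <= 1) ->
  (expR (\sum_i `|a i| * - ln c))^-1 * q k `^ a k <= \prod_i q i `^ a i
  <= expR (\sum_i `|a i| * - ln c) * q k `^ a k.
Proof.
move=> c_bnd q_bnd; rewrite [\prod_i _](bigD1 k) //=.
have /andP[lo hi] := prod_powR_bounds _ _ a q c c_bnd q_bnd.
have qk_ge0 := powR_ge0 (q k) (a k).
apply/andP; split; rewrite mulrC.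
  exact: ler_wpM2l.
exact: ler_wpM2r.
Qed.

End PowerBounds.

Section VertexSeparation.
Context {R : realType} {I : finType} (p : I -> 'rV[R]_3).

Definition vertex_sep : R :=
  \big[Num.min/1]_(ij : I * I | ij.1 != ij.2) enorm (p ij.1 - p ij.2).

Lemma vertex_sep_le1 : vertex_sep <= 1.
Proof. exact: bigmin_le_id. Qed.

Lemma vertex_sep_le i j : i != j -> vertex_sep <= enorm (p i - p j).
Proof. by move=> ij; apply: (@bigmin_le_cond _ _ _ _ (i, j)). Qed.

Lemma vertex_sep_gt0 : injective p -> 0 < vertex_sep.
Proof.
move=> p_inj; apply: lt_bigmin => // -[i j] /= ij.
by rewrite enorm_gt0 // subr_eq0; apply: contra ij => /eqP /p_inj ->.
Qed.

End VertexSeparation.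

Theorem lemma3p1 (R : realType) (N0 : nat) (p : 'I_N0 -> 'rV[R]_3)
    (M : set 'rV[R]_3) (HM : polyhedral_cone p M) :
  (forall (i : 'I_N0) (x : 'rV[R]_3), cone M x ->
     dist_set x (edge (p i)) <= enorm (x - enorm x *: p i)
     <= 2 * dist_set x (edge (p i)))
  /\
  (forall alpha : 'I_N0 -> R, exists N : R, 0 < N /\
     forall (x : 'rV[R]_3) (r : R) (k : 'I_N0), cone M x -> 0 < r ->
       dist_set x (\bigcup_(i in setT) edge (p i)) = dist_set x (edge (p k)) ->
       let q := fun j : 'I_N0 =>
         Num.min (dist_set x (edge (p j))) r / Num.min (enorm x) r in
       N^-1 * (q k `^ alpha k) <= \prod_(i < N0) (q i `^ alpha i)
       <= N * (q k `^ alpha k)).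
Proof.
case: HM => -[_ _ _ _ [p_unit p_inj]] _.
split=> [i x _|alpha]; first exact: dist_edge_radial.
pose c := vertex_sep p / 4.
have c_bnd : 0 < c <= 1.
  rewrite divr_gt0 ?vertex_sep_gt0 //= ler_pdivrMr // mul1r.
  by rewrite (le_trans (vertex_sep_le1 p)) // ler1n.
exists (expR (\sum_i `|alpha i| * - ln c)); split; first exact: expR_gt0.
move=> x r k [x_neq0 _] r_gt0 dk_min.
apply: (prod_powR_near _ k alpha _ c c_bnd) => i ik.
apply: min_ratio_bounds; rewrite ?enorm_gt0 ?dist_edge_le_enorm ?andbT //.
have dk_le_di : dist_set x (edge (p k)) <= dist_set x (edge (p i)).
  rewrite -dk_min; apply: le_dist_set => [y Ey|]; first by exists i.
  by exists 0; apply: edge0.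
have := dist_edge_sep x _ _ (p_unit i) (p_unit k) dk_le_di.
have := vertex_sep_le p _ _ ik; have := enorm_ge0 x; rewrite /c; nra.
Qed.
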